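(* Let $M=\mathrm{Mon}\langle \Sigma \mid R\rangle$ be a finitely presented monoid and let $\mathfrak{R}$ be a rewriting system for $M$ that is complete and cyclically complete. Let $u,v\in\Sigma^*$. If $u=_M v$, then $\rho(u)\simeq\rho(v)$.
   Context: $\Sigma^*$ is the free monoid on the alphabet $\Sigma$; $=_M$ is equality in $M$. A rewriting system $\mathfrak{R}$ is a set of rules $l\to r$ with $l,r\in\Sigma^*$; $plq\to prq$ is one rewriting step. $\mathfrak{R}$ is complete for $M$ if it is terminating, confluent, and the congruence it generates on $\Sigma^*$ is $=_M$. $u\simeq v$ means $u=ab$, $v=ba$ for some words $a,b$ (cyclic conjugates in $\Sigma^*$). $u\rightsquigarrow v$ means some cyclic conjugate $\tilde u$ of $u$ (possibly $u$) satisfies $\tilde u\to v$; $\rightsquigarrow^*$ is its reflexive–transitive closure. $\mathfrak{R}$ is cyclically terminating if there is no infinite sequence $u_1\rightsquigarrow u_2\rightsquigarrow\cdots$; cyclically confluent if whenever $w\rightsquigarrow^* u$ and $w\rightsquigarrow^* v$ there exist $z\simeq z'$ with $u\rightsquigarrow^* z$ and $v\rightsquigarrow^* z'$; cyclically complete if both. A word is cyclically irreducible if it and all its cyclic conjugates are irreducible modulo $\mathfrak{R}$. $\rho(u)$ denotes a cyclically irreducible form of $u$, i.e. a cyclically irreducible word $w$ with $u\rightsquigarrow^* w$; when $\mathfrak{R}$ is cyclically complete, every word has such a form, unique up to $\simeq$. *)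

From mathcomp Require Import all_boot.
From Stdlib Require Import Relations.
Set Implicit Arguments. Unset Strict Implicit. Unset Printing Implicit Defensive.

Section Rewriting.
Variable Sigma : finType.
Notation word := (seq Sigma).

Definition rstep (rs : word -> word -> Prop) (u v : word) : Prop :=
  exists p q l r, rs l r /\ u = p ++ l ++ q /\ v = p ++ r ++ q.

Definition rel_rules (R : seq (word * word)) (l r : word) : Prop := (l, r) \in R.

(* equality in M = Mon<Sigma | R>: the congruence on Sigma^* generated by R *)
Definition eqM (R : seq (word * word)) (u v : word) : Prop :=
  clos_refl_sym_trans word (rstep (rel_rules R)) u v.

Definition terminating (rs : word -> word -> Prop) : Prop :=
  ~ exists f : nat -> word, forall n, rstep rs (f n) (f n.+1).

Definition rstar (rs : word -> word -> Prop) := clos_refl_trans word (rstep rs).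

Definition confluent (rs : word -> word -> Prop) : Prop :=
  forall w u v, rstar rs w u -> rstar rs w v ->
    exists z, rstar rs u z /\ rstar rs v z.

Definition complete_for (R : seq (word * word)) (rs : word -> word -> Prop) : Prop :=
  [/\ terminating rs, confluent rs &
      forall u v, clos_refl_sym_trans word (rstep rs) u v <-> eqM R u v].

Definition cconj (u v : word) : Prop := exists a b, u = a ++ b /\ v = b ++ a.

Definition cstep (rs : word -> word -> Prop) (u v : word) : Prop :=
  exists u', cconj u u' /\ rstep rs u' v.

Definition cstar (rs : word -> word -> Prop) := clos_refl_trans word (cstep rs).

Definition cyc_terminating (rs : word -> word -> Prop) : Prop :=
  ~ exists f : nat -> word, forall n, cstep rs (f n) (f n.+1).

Definition cyc_confluent (rs : word -> word -> Prop) : Prop :=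
  forall w u v, cstar rs w u -> cstar rs w v ->
    exists z z', [/\ cconj z z', cstar rs u z & cstar rs v z'].

Definition cyc_complete (rs : word -> word -> Prop) : Prop :=
  cyc_terminating rs /\ cyc_confluent rs.

Definition irreducible (rs : word -> word -> Prop) (w : word) : Prop :=
  ~ exists v, rstep rs w v.

Definition cyc_irreducible (rs : word -> word -> Prop) (w : word) : Prop :=
  forall w', cconj w w' -> irreducible rs w'.

Definition is_rho (rs : word -> word -> Prop) (u w : word) : Prop :=
  cyc_irreducible rs w /\ cstar rs u w.

End Rewriting.

(* Completeness makes u and v joinable by ordinary rewriting, say to n; every
   ordinary step is also a cyclic step, so n is a common cyclic descendant of
   u and v.  Cyclic confluence then carries rho(u) and rho(v), up to
   conjugation, to cyclically irreducible forms of n, and any two of those are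
   conjugate because a cyclically irreducible word has no proper cyclic
   descendant. *)
From mathcomp Require Import all_boot.
From Stdlib Require Import Relations.

Set Implicit Arguments.
Unset Strict Implicit.
Unset Printing Implicit Defensive.

Section ChurchRosser.
Variables (A : Type) (r : relation A).

Lemma church_rosser :
  (forall w u v, clos_refl_trans A r w u -> clos_refl_trans A r w v ->
     exists z, clos_refl_trans A r u z /\ clos_refl_trans A r v z) ->
  forall u v, clos_refl_sym_trans A r u v ->
  exists z, clos_refl_trans A r u z /\ clos_refl_trans A r v z.
Proof.
move=> confl u v; elim=> [x y xy | x | x y _ [z [xz yz]]
                        | x y z _ [a [xa ya]] _ [b [yb zb]]].
- by exists y; split; [apply: rt_step | apply: rt_refl].
- by exists x; split; apply: rt_refl.
- by exists z.
- have [c [ac bc]] := confl _ _ _ ya yb.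
  by exists c; split; [apply: rt_trans xa ac | apply: rt_trans zb bc].
Qed.

End ChurchRosser.

Section CyclicNormalForms.
Variable Sigma : finType.
Notation word := (seq Sigma).
Implicit Types (rs : word -> word -> Prop) (u v w : word).

Lemma cconj_rot u v : cconj u v <-> exists k, k <= size u /\ v = rot k u.
Proof.
split.
- move=> [a [b [-> ->]]]; exists (size a).
  by rewrite size_cat leq_addr rot_size_cat.
- move=> [k [_ ->]]; exists (take k u), (drop k u).
  by rewrite cat_take_drop.
Qed.

Lemma cconj_sym u v : cconj u v -> cconj v u.
Proof. by move=> [a [b [-> ->]]]; exists b, a. Qed.

Lemma cconj_trans u v w : cconj u v -> cconj v w -> cconj u w.
Proof.
move=> /cconj_rot [k [le_k_u ->]] /cconj_rot [m [le_m_u ->]].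
apply/cconj_rot; rewrite size_rot in le_m_u; rewrite rot_add_mod //.
case: ifP => [le_km_u | _]; eexists; (split; last reflexivity) => //.
by rewrite leq_subLR leq_add.
Qed.

Lemma cyc_irreducible_cconj rs u v :
  cyc_irreducible rs u -> cconj u v -> cyc_irreducible rs v.
Proof. by move=> irr_u uv w vw; apply: irr_u; apply: cconj_trans uv vw. Qed.

Lemma cyc_irreducible_cstar_eq rs u v :
  cyc_irreducible rs u -> cstar rs u v -> v = u.
Proof.
move=> irr_u /clos_rt_rt1n_iff [//|y v' [u' [uu' u'y]] _].
by case: (irr_u u' uu'); exists y.
Qed.

Lemma rstar_cstar rs u v : rstar rs u v -> cstar rs u v.
Proof.
elim=> [x y xy | x | x y z _ xy _ yz].
- by apply: rt_step; exists x; split=> //; exists x, [::]; rewrite cats0.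
- exact: rt_refl.
- exact: rt_trans xy yz.
Qed.

Hypothesis (rs : word -> word -> Prop) (cconfl : cyc_confluent rs).

Lemma is_rho_cconj w u v : is_rho rs w u -> is_rho rs w v -> cconj u v.
Proof.
move=> [irr_u wu] [irr_v wv].
have [z [z' [zz' uz vz']]] := cconfl wu wv.
rewrite -(cyc_irreducible_cstar_eq irr_u uz).
by rewrite -(cyc_irreducible_cstar_eq irr_v vz').
Qed.

Lemma is_rho_cstar u w ru :
  is_rho rs u ru -> cstar rs u w -> exists2 rw, cconj ru rw & is_rho rs w rw.
Proof.
move=> [irr_ru uru] uw.
have [z [rw [z_rw ruz wrw]]] := cconfl uru uw.
rewrite (cyc_irreducible_cstar_eq irr_ru ruz) in z_rw.
by exists rw => //; split => //; apply: cyc_irreducible_cconj irr_ru z_rw.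
Qed.

End CyclicNormalForms.

Theorem lemma3p2 (Sigma : finType) (R : seq (seq Sigma * seq Sigma))
  (rs : seq Sigma -> seq Sigma -> Prop) :
  complete_for R rs -> cyc_complete rs ->
  forall u v : seq Sigma, eqM R u v ->
  forall ru rv : seq Sigma, is_rho rs u ru -> is_rho rs v rv ->
  cconj ru rv.
Proof.
move=> [_ confl eqM_rs] [_ cconfl] u v uv ru rv rho_u rho_v.
have [n [un vn]] := church_rosser confl (proj2 (eqM_rs u v) uv).
have [ru' ru_ru' rho_n_ru'] := is_rho_cstar cconfl rho_u (rstar_cstar un).
have [rv' rv_rv' rho_n_rv'] := is_rho_cstar cconfl rho_v (rstar_cstar vn).
apply: cconj_trans ru_ru' _; apply: cconj_trans _ (cconj_sym rv_rv').
exact: (is_rho_cconj cconfl rho_n_ru' rho_n_rv').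
Qed.
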